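(* Let $\sigma_\rho>0$ and let $W$ follow the unit-log-normal distribution, i.e. $W$ has PDF $$f_W(w;\sigma_\rho)=\frac{1}{w(1-w)\sigma_\rho}\,\phi(A(w)),\qquad 0<w<1,$$ where $\phi$ is the standard normal PDF and $A(w)=\frac{1}{\sigma_\rho}\log\frac{w}{1-w}$. If $\sigma_\rho\le\sqrt2$, then $f_W(\cdot;\sigma_\rho)$ is unimodal with mode $w_0=1/2$. If $\sigma_\rho>\sqrt2$, then the equation $\frac{\sigma_\rho^2}{2}y={\rm arctanh}(y)$ has exactly two nonzero solutions $y_-<0<y_+=-y_-$, and $f_W(\cdot;\sigma_\rho)$ is bimodal with modes $$w_-=\frac{1}{1+\exp(-\sigma_\rho^2y_-)},\qquad w_+=\frac{1}{1+\exp(-\sigma_\rho^2y_+)},$$ and minimum point $w_0=1/2$, with $0<w_-<w_0<w_+<1$. Moreover, the graph of $f_W(\cdot;\sigma_\rho)$ is symmetric around $w_0=1/2$.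
   Context: This is the unit-log-symmetric distribution ${\rm ULS}(\sigma_\rho,g_c)$ with density generator $g_c(x)=\exp(-x/2)$, where $\sigma_\rho=\sigma\sqrt{2(1-\rho)}$; for this generator the ULS PDF reduces to the displayed formula. *)

From Stdlib Require Import Reals.
Open Scope R_scope.

Definition phi (x : R) : R := exp (- (x ^ 2) / 2) / sqrt (2 * PI).

Definition A_fun (s w : R) : R := ln (w / (1 - w)) / s.

(* unit-log-normal PDF f_W(w; sigma), meaningful for 0 < w < 1 *)
Definition fW (s w : R) : R := phi (A_fun s w) / (w * (1 - w) * s).

Definition arctanh (y : R) : R := ln ((1 + y) / (1 - y)) / 2.

Definition strict_incr_on (f : R -> R) (a b : R) : Prop :=
  forall x y, a <= x -> x < y -> y <= b -> f x < f y.
Definition strict_decr_on (f : R -> R) (a b : R) : Prop :=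
  forall x y, a <= x -> x < y -> y <= b -> f y < f x.

Definition unimodal01 (f : R -> R) (m : R) : Prop :=
  0 < m < 1 /\
  (forall a, 0 < a -> a <= m -> strict_incr_on f a m) /\
  (forall b, m <= b -> b < 1 -> strict_decr_on f m b).

Definition bimodal01 (f : R -> R) (m1 c m2 : R) : Prop :=
  0 < m1 < c /\ c < m2 < 1 /\
  (forall a, 0 < a -> a <= m1 -> strict_incr_on f a m1) /\
  strict_decr_on f m1 c /\
  strict_incr_on f c m2 /\
  (forall b, m2 <= b -> b < 1 -> strict_decr_on f m2 b).

(** Up to a positive constant, [fW s] is the exponential of a function whose
    derivative has the sign of [D(w) = 2w - 1 - logit(w)/s^2].  [D] is odd about
    [1/2], vanishes there, and [D'(w) = 2 - 1/(s^2 w(1-w))].  Since [w(1-w) <= 1/4],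
    for [s^2 <= 2] it is decreasing, so [1/2] is the only critical point.  For
    [s^2 > 2] it increases near [1/2] and decreases near the end points, where it
    tends to [-oo]; hence it has exactly one zero [w+] in [(1/2, 1)], mirrored by
    [1 - w+] in [(0, 1/2)].
    Substituting [w = (1+y)/2] turns [D(w) = 0] into [s^2 y/2 = arctanh y] and
    [D(w+) = 0] into [w+ = 1/(1 + exp(-s^2 y+))]. *)

From Stdlib Require Import Reals Lra Psatz Ranalysis5.
From Coquelicot Require Import Coquelicot.
Open Scope R_scope.

Lemma lt_of_deriv_pos (f f' : R -> R) (x y : R) : x < y ->
  (forall c, x <= c <= y -> derivable_pt_lim f c (f' c)) ->
  (forall c, x < c < y -> 0 < f' c) -> f x < f y.
Proof.
  intros hxy hder hpos.
  destruct (MVT_cor2 f f' x y hxy hder) as [c [hmvt hc]].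
  specialize (hpos c hc). nra.
Qed.

Lemma gt_of_deriv_neg (f f' : R -> R) (x y : R) : x < y ->
  (forall c, x <= c <= y -> derivable_pt_lim f c (f' c)) ->
  (forall c, x < c < y -> f' c < 0) -> f y < f x.
Proof.
  intros hxy hder hneg.
  destruct (MVT_cor2 f f' x y hxy hder) as [c [hmvt hc]].
  specialize (hneg c hc). nra.
Qed.

Lemma two_minus_inv_pos (p : R) : 1 < 2 * p -> 0 < 2 - / p.
Proof.
  intros hp. assert (0 < / p) by (apply Rinv_0_lt_compat; lra).
  assert (/ p * p = 1) by (field; lra). nra.
Qed.

Lemma two_minus_inv_neg (p : R) : 0 < p -> 2 * p < 1 -> 2 - / p < 0.
Proof.
  intros hp0 hp. assert (0 < / p) by (apply Rinv_0_lt_compat; lra).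
  assert (/ p * p = 1) by (field; lra). nra.
Qed.

Definition logit (w : R) : R := ln (w / (1 - w)).

Lemma logit_sym (w : R) : 0 < w < 1 -> logit (1 - w) = - logit w.
Proof.
  intros hw. unfold logit. rewrite <- ln_Rinv by (apply Rdiv_lt_0_compat; lra).
  f_equal. field. lra.
Qed.

Lemma logit_half : logit (1 / 2) = 0.
Proof. unfold logit. replace (1 / 2 / (1 - 1 / 2)) with 1 by field. apply ln_1. Qed.

Lemma logit_logistic (t : R) : logit (1 / (1 + exp (- t))) = t.
Proof.
  pose proof (exp_pos (- t)) as he. unfold logit.
  replace (1 / (1 + exp (- t)) / (1 - 1 / (1 + exp (- t)))) with (/ exp (- t))
    by (field; lra).
  rewrite <- exp_Ropp, Ropp_involutive. apply ln_exp.
Qed.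

Lemma logistic_bounds (t : R) : 0 < t -> 1 / 2 < 1 / (1 + exp (- t)) < 1.
Proof.
  intros ht. assert (0 < exp (- t) < 1).
  { split; [apply exp_pos|]. rewrite <- exp_0. apply exp_increasing. lra. }
  split; apply (Rmult_lt_reg_r (1 + exp (- t))); field_simplify; lra.
Qed.

Lemma logistic_logit (w : R) : 0 < w < 1 -> 1 / (1 + exp (- logit w)) = w.
Proof.
  intros hw. unfold logit.
  rewrite exp_Ropp, exp_ln by (apply Rdiv_lt_0_compat; lra). field. lra.
Qed.

Lemma arctanh_logit (y : R) : -1 < y < 1 -> arctanh y = logit ((1 + y) / 2) / 2.
Proof.
  intros hy. unfold arctanh, logit.
  replace ((1 + y) / 2 / (1 - (1 + y) / 2)) with ((1 + y) / (1 - y)) by (field; lra).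
  reflexivity.
Qed.

Definition log_kernel (s w : R) : R := - (logit w / s) ^ 2 / 2 - ln w - ln (1 - w).

Definition kernel_slope (s w : R) : R := 2 * w - 1 - logit w / s ^ 2.

Section UnitLogNormal.

Variable s : R.
Hypothesis hs : 0 < s.

Lemma fW_exp_log_kernel (w : R) : 0 < w < 1 ->
  fW s w = exp (log_kernel s w) / (sqrt (2 * PI) * s).
Proof.
  intros hw. unfold fW, phi, A_fun, log_kernel, logit, Rminus.
  rewrite !exp_plus, !exp_Ropp, !exp_ln by lra.
  field. repeat split; try lra.
  apply Rgt_not_eq, sqrt_lt_R0. pose proof PI_RGT_0; lra.
Qed.

Lemma log_kernel_deriv (w : R) : 0 < w < 1 ->
  derivable_pt_lim (log_kernel s) w (kernel_slope s w / (w * (1 - w))).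
Proof.
  intros hw. apply is_derive_Reals. unfold log_kernel, kernel_slope, logit.
  auto_derive.
  - repeat split; try lra. apply Rdiv_lt_0_compat; lra.
  - change (w * / (1 + - w)) with (w / (1 - w)).
    field. repeat split; lra.
Qed.

Lemma kernel_slope_deriv (w : R) : 0 < w < 1 ->
  derivable_pt_lim (kernel_slope s) w (2 - / (s ^ 2 * (w * (1 - w)))).
Proof.
  intros hw. apply is_derive_Reals. unfold kernel_slope, logit.
  auto_derive.
  - repeat split; try lra. apply Rdiv_lt_0_compat; lra.
  - field. repeat split; lra.
Qed.

Lemma fW_sym (w : R) : 0 < w < 1 -> fW s (1 - w) = fW s w.
Proof.
  intros hw. rewrite !fW_exp_log_kernel by lra. unfold log_kernel.
  rewrite logit_sym by lra. replace (1 - (1 - w)) with w by ring.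
  do 2 f_equal. field. lra.
Qed.

Lemma kernel_slope_sym (w : R) : 0 < w < 1 -> kernel_slope s (1 - w) = - kernel_slope s w.
Proof. intros hw. unfold kernel_slope. rewrite logit_sym by lra. field. lra. Qed.

Lemma kernel_slope_half : kernel_slope s (1 / 2) = 0.
Proof. unfold kernel_slope. rewrite logit_half. field. lra. Qed.

Lemma fW_lt_of_log_kernel_lt (x y : R) : 0 < x < 1 -> 0 < y < 1 ->
  log_kernel s x < log_kernel s y -> fW s x < fW s y.
Proof.
  intros hx hy hlt. rewrite !fW_exp_log_kernel by lra.
  apply Rmult_lt_compat_r; [|apply exp_increasing, hlt].
  apply Rinv_0_lt_compat, Rmult_lt_0_compat; [|lra].
  apply sqrt_lt_R0. pose proof PI_RGT_0; lra.
Qed.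

Lemma fW_strict_incr_on (a b : R) : 0 < a -> b < 1 ->
  (forall c, a < c < b -> 0 < kernel_slope s c) -> strict_incr_on (fW s) a b.
Proof.
  intros ha hb hpos x y hx hxy hy. apply fW_lt_of_log_kernel_lt; try lra.
  apply (lt_of_deriv_pos _ (fun c => kernel_slope s c / (c * (1 - c))) x y hxy).
  - intros c hc. apply log_kernel_deriv; lra.
  - intros c hc. apply Rdiv_lt_0_compat; [apply hpos; lra | nra].
Qed.

Lemma fW_strict_decr_on (a b : R) : 0 < a -> b < 1 ->
  (forall c, a < c < b -> kernel_slope s c < 0) -> strict_decr_on (fW s) a b.
Proof.
  intros ha hb hneg x y hx hxy hy. apply fW_lt_of_log_kernel_lt; try lra.
  apply (gt_of_deriv_neg _ (fun c => kernel_slope s c / (c * (1 - c))) x y hxy).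
  - intros c hc. apply log_kernel_deriv; lra.
  - intros c hc. assert (kernel_slope s c < 0) by (apply hneg; lra).
    assert (0 < / (c * (1 - c))) by (apply Rinv_0_lt_compat; nra).
    unfold Rdiv. nra.
Qed.

Lemma kernel_slope_lt (x y : R) : 0 < x -> x < y -> y < 1 ->
  (forall c, x < c < y -> 1 < 2 * s ^ 2 * (c * (1 - c))) ->
  kernel_slope s x < kernel_slope s y.
Proof.
  intros hx hxy hy hc.
  apply (lt_of_deriv_pos _ (fun c => 2 - / (s ^ 2 * (c * (1 - c)))) x y hxy).
  - intros c hc'. apply kernel_slope_deriv; lra.
  - intros c hc'. apply two_minus_inv_pos. specialize (hc c hc'). lra.
Qed.

Lemma kernel_slope_gt (x y : R) : 0 < x -> x < y -> y < 1 ->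
  (forall c, x < c < y -> 2 * s ^ 2 * (c * (1 - c)) < 1) ->
  kernel_slope s y < kernel_slope s x.
Proof.
  intros hx hxy hy hc.
  apply (gt_of_deriv_neg _ (fun c => 2 - / (s ^ 2 * (c * (1 - c)))) x y hxy).
  - intros c hc'. apply kernel_slope_deriv; lra.
  - intros c hc'. specialize (hc c hc').
    apply two_minus_inv_neg; [|lra].
    apply Rmult_lt_0_compat; [apply pow_lt; lra | nra].
Qed.

Lemma kernel_slope_neg_small (w : R) : s ^ 2 <= 2 -> 1 / 2 < w < 1 ->
  kernel_slope s w < 0.
Proof.
  intros h2 hw. rewrite <- kernel_slope_half. apply kernel_slope_gt; try lra.
  intros c hc. assert (0 < c * (1 - c) < 1 / 4) by nra. nra.
Qed.

Lemma fW_unimodal : s ^ 2 <= 2 -> unimodal01 (fW s) (1 / 2).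
Proof.
  intros h2. split; [lra | split].
  - intros a ha ham. apply fW_strict_incr_on; try lra.
    intros c hc. replace c with (1 - (1 - c)) by ring. rewrite kernel_slope_sym by lra.
    pose proof (kernel_slope_neg_small (1 - c) h2 ltac:(lra)). lra.
  - intros b hb hb1. apply fW_strict_decr_on; try lra.
    intros c hc. apply kernel_slope_neg_small; lra.
Qed.

Lemma slope_turning_point : 2 < s ^ 2 ->
  exists c0, 1 / 2 < c0 < 1 /\ 2 * s ^ 2 * (c0 * (1 - c0)) = 1.
Proof.
  intros h2. set (r := sqrt (1 - 2 / s ^ 2)).
  assert (hq : 0 < 2 / s ^ 2 < 1).
  { assert (2 / s ^ 2 * s ^ 2 = 2) by (field; lra).
    split; [apply Rdiv_lt_0_compat|]; nra. }
  assert (hr2 : r * r = 1 - 2 / s ^ 2) by (apply sqrt_sqrt; lra).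
  assert (hr : 0 < r) by (apply sqrt_lt_R0; lra).
  exists ((1 + r) / 2). split; [nra|].
  replace (2 * s ^ 2 * ((1 + r) / 2 * (1 - (1 + r) / 2))) with (s ^ 2 * (1 - r * r) / 2)
    by field.
  rewrite hr2. field. lra.
Qed.

Lemma kernel_slope_logistic_neg : kernel_slope s (1 / (1 + exp (- s ^ 2))) < 0.
Proof.
  unfold kernel_slope. rewrite logit_logistic.
  replace (s ^ 2 / s ^ 2) with 1 by (field; lra).
  pose proof (exp_pos (- s ^ 2)).
  assert (1 / (1 + exp (- s ^ 2)) < 1); [|lra].
  apply (Rmult_lt_reg_r (1 + exp (- s ^ 2))); field_simplify; lra.
Qed.

Lemma kernel_slope_root : 2 < s ^ 2 ->
  exists wp, 1 / 2 < wp < 1 /\ kernel_slope s wp = 0 /\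
    (forall w, 1 / 2 < w < wp -> 0 < kernel_slope s w) /\
    (forall w, wp < w < 1 -> kernel_slope s w < 0).
Proof.
  intros h2. destruct (slope_turning_point h2) as (c0 & hc0 & hturn).
  assert (hrise : forall w, 1 / 2 < w <= c0 -> 0 < kernel_slope s w).
  { intros w hw. rewrite <- kernel_slope_half. apply kernel_slope_lt; try lra.
    intros c hc. assert (c0 * (1 - c0) < c * (1 - c)) by nra. nra. }
  assert (hfall : forall x y, c0 <= x -> x < y -> y < 1 ->
                  kernel_slope s y < kernel_slope s x).
  { intros x y hx hxy hy. apply kernel_slope_gt; try lra.
    intros c hc. assert (c * (1 - c) < c0 * (1 - c0)) by nra. nra. }
  set (w1 := 1 / (1 + exp (- s ^ 2))).
  assert (hw1 : 1 / 2 < w1 < 1) by (apply logistic_bounds; nra).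
  pose proof kernel_slope_logistic_neg as hw1neg. fold w1 in hw1neg.
  assert (hc0w1 : c0 < w1).
  { destruct (Rle_lt_dec w1 c0); [|lra]. pose proof (hrise w1 ltac:(lra)). lra. }
  destruct (IVT_interv (fun w => - kernel_slope s w) c0 w1) as (wp & hwp & hroot);
    [| lra | pose proof (hrise c0 ltac:(lra)); lra | lra |].
  { intros a ha. apply continuity_pt_opp, derivable_continuous_pt.
    exists (2 - / (s ^ 2 * (a * (1 - a)))). apply kernel_slope_deriv. lra. }
  simpl in hroot.
  assert (hwp' : c0 < wp).
  { destruct (Req_dec wp c0) as [e|]; [|lra].
    subst wp. pose proof (hrise c0 ltac:(lra)). lra. }
  exists wp. split; [lra | split; [lra | split]].
  - intros w hw. destruct (Rle_lt_dec w c0); [apply hrise; lra|].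
    pose proof (hfall w wp ltac:(lra) ltac:(lra) ltac:(lra)). lra.
  - intros w hw. pose proof (hfall wp w ltac:(lra) ltac:(lra) ltac:(lra)). lra.
Qed.

Lemma logistic_of_kernel_slope_root (w : R) : 0 < w < 1 -> kernel_slope s w = 0 ->
  1 / (1 + exp (- s ^ 2 * (2 * w - 1))) = w.
Proof.
  intros hw hroot.
  replace (- s ^ 2 * (2 * w - 1)) with (- logit w).
  - apply logistic_logit. lra.
  - unfold kernel_slope in hroot.
    assert (logit w = s ^ 2 * (2 * w - 1)); [|lra].
    apply (Rmult_eq_reg_r (/ s ^ 2)); [|apply Rinv_neq_0_compat; nra].
    field_simplify; [lra | nra | nra].
Qed.

Lemma arctanh_fixed_point_iff (y : R) : -1 < y < 1 ->
  (s ^ 2 / 2 * y = arctanh y <-> kernel_slope s ((1 + y) / 2) = 0).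
Proof.
  intros hy. rewrite arctanh_logit by lra.
  assert (hD : kernel_slope s ((1 + y) / 2)
               = (s ^ 2 / 2 * y - logit ((1 + y) / 2) / 2) * (2 / s ^ 2)).
  { unfold kernel_slope. field. lra. }
  assert (0 < 2 / s ^ 2) by (apply Rdiv_lt_0_compat; nra).
  rewrite hD. split; intros h.
  - rewrite h. ring.
  - destruct (Rmult_integral _ _ h); lra.
Qed.

Section Bimodal.

Variable wp : R.
Hypothesis hwp : 1 / 2 < wp < 1.
Hypothesis hroot : kernel_slope s wp = 0.
Hypothesis hpos : forall w, 1 / 2 < w < wp -> 0 < kernel_slope s w.
Hypothesis hneg : forall w, wp < w < 1 -> kernel_slope s w < 0.

Lemma kernel_slope_zero_right (w : R) : 1 / 2 < w < 1 -> kernel_slope s w = 0 -> w = wp.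
Proof.
  intros hw h0. destruct (Rtotal_order w wp) as [h|[h|h]]; [|exact h|].
  - pose proof (hpos w ltac:(lra)). lra.
  - pose proof (hneg w ltac:(lra)). lra.
Qed.

Lemma kernel_slope_zero_iff (w : R) : 0 < w < 1 ->
  (kernel_slope s w = 0 <-> w = 1 - wp \/ w = 1 / 2 \/ w = wp).
Proof.
  intros hw. split.
  - intros h0. destruct (Rtotal_order w (1 / 2)) as [h|[h|h]].
    + left. assert (1 - w = wp); [|lra].
      apply kernel_slope_zero_right; [lra|]. rewrite kernel_slope_sym by lra. lra.
    + right; left. exact h.
    + right; right. apply kernel_slope_zero_right; lra.
  - intros [e|[e|e]]; subst w.
    + rewrite kernel_slope_sym by lra. lra.
    + apply kernel_slope_half.
    + exact hroot.
Qed.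

Lemma fW_bimodal : bimodal01 (fW s) (1 - wp) (1 / 2) wp.
Proof.
  split; [lra | split; [lra | split; [|split; [|split]]]].
  - intros a ha ham. apply fW_strict_incr_on; try lra.
    intros c hc. replace c with (1 - (1 - c)) by ring.
    rewrite kernel_slope_sym by lra. pose proof (hneg (1 - c) ltac:(lra)). lra.
  - apply fW_strict_decr_on; try lra.
    intros c hc. replace c with (1 - (1 - c)) by ring.
    rewrite kernel_slope_sym by lra. pose proof (hpos (1 - c) ltac:(lra)). lra.
  - apply fW_strict_incr_on; try lra. intros c hc. apply hpos. lra.
  - intros b hb hb1. apply fW_strict_decr_on; try lra. intros c hc. apply hneg. lra.
Qed.

End Bimodal.

End UnitLogNormal.

Theorem theorem1 (s : R) (hs : 0 < s) :
  (s <= sqrt 2 -> unimodal01 (fW s) (1 / 2)) /\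
  (sqrt 2 < s ->
     exists ym yp : R,
       ym < 0 /\ 0 < yp /\ yp = - ym /\
       (forall y : R, -1 < y < 1 -> y <> 0 ->
          (s ^ 2 / 2 * y = arctanh y <-> (y = ym \/ y = yp))) /\
       let wm := 1 / (1 + exp (- (s ^ 2) * ym)) in
       let wp := 1 / (1 + exp (- (s ^ 2) * yp)) in
       0 < wm /\ wm < 1 / 2 /\ 1 / 2 < wp /\ wp < 1 /\
       bimodal01 (fW s) wm (1 / 2) wp) /\
  (forall w : R, 0 < w < 1 -> fW s (1 - w) = fW s w).
Proof.
  pose proof (sqrt_sqrt 2 ltac:(lra)) as h22. pose proof (sqrt_pos 2).
  split; [|split].
  - intros hle. apply fW_unimodal; nra.
  - intros hlt.
    destruct (kernel_slope_root s hs ltac:(nra)) as (wp & hwp & hroot & hpos & hneg).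
    exists (1 - 2 * wp), (2 * wp - 1).
    split; [lra | split; [lra | split; [lra | split]]].
    + intros y hy hy0.
      rewrite arctanh_fixed_point_iff, (kernel_slope_zero_iff s hs wp) by (auto; lra).
      split.
      * intros [e|[e|e]]; [left; lra | exfalso; apply hy0; lra | right; lra].
      * intros [e|e]; [left | right; right]; lra.
    + cbv zeta. replace (1 - 2 * wp) with (2 * (1 - wp) - 1) by ring.
      rewrite !logistic_of_kernel_slope_root by
        (try rewrite kernel_slope_sym; lra).
      split; [lra | split; [lra | split; [lra | split; [lra|]]]].
      apply fW_bimodal; assumption.
  - intros w hw. apply fW_sym; assumption.
Qed.
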